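(* Consider a Fisher market with $n$ buyers and $m$ items, each item having supply $1$, in which every buyer values every item at $v_{ij}=1$. Buyer $i$ has a hard demand $d_i\ge 0$ and budget $B_i$. Assume there exists an allocation $x\ge 0$ with $\sum_i x_{ij}\le 1$ for all $j$ and $\sum_j x_{ij}-d_i>0$ for all $i$. Let $x$ be an optimal solution of $$\max_{x\ge 0}\sum_i B_i\log\Big(\sum_j x_{ij}-d_i\Big)\quad\text{s.t.}\quad \sum_i x_{ij}\le 1\ \ \forall j.$$ (i) If $B_i=1$ for all buyers $i$, then the difference $\sum_j x_{ij}-d_i$ is the same for all buyers $i$. (ii) If $B_i=d_i>0$ for all buyers $i$, then the ratio $\frac{\sum_j x_{ij}}{d_i}$ is the same for all buyers $i$. *)

From HB Require Import structures.
From mathcomp Require Import all_boot all_order all_algebra.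
From mathcomp Require Import reals exp.
Set Implicit Arguments. Unset Strict Implicit. Unset Printing Implicit Defensive.
Import Order.TTheory GRing.Theory Num.Theory.
Local Open Scope ring_scope.

(* Fisher market with n buyers, m items, unit supplies, all valuations v_ij = 1.
   An allocation is x : 'I_n -> 'I_m -> R, x i j = amount of item j to buyer i. *)

Definition feasible (R : realType) (n m : nat) (x : 'I_n -> 'I_m -> R) : Prop :=
  (forall i j, 0 <= x i j) /\ (forall j, \sum_(i < n) x i j <= 1).

Definition surplus (R : realType) (n m : nat) (x : 'I_n -> 'I_m -> R)
  (d : 'I_n -> R) (i : 'I_n) : R := \sum_(j < m) x i j - d i.

Definition objective (R : realType) (n m : nat) (B d : 'I_n -> R)
  (x : 'I_n -> 'I_m -> R) : R := \sum_(i < n) B i * ln (surplus x d i).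

(* x is an optimal solution of max sum_i B_i log(sum_j x_ij - d_i) s.t. x >= 0,
   sum_i x_ij <= 1; the log is only finite on positive surpluses (it is -oo
   otherwise), so the optimum is taken over feasible x with positive surpluses. *)
Definition optimal (R : realType) (n m : nat) (B d : 'I_n -> R)
  (x : 'I_n -> 'I_m -> R) : Prop :=
  feasible x /\ (forall i, 0 < surplus x d i) /\
  (forall y : 'I_n -> 'I_m -> R, feasible y -> (forall i, 0 < surplus y d i) ->
     objective B d y <= objective B d x).

From HB Require Import structures.
From mathcomp Require Import all_boot all_order all_algebra.
From mathcomp Require Import reals exp.
From mathcomp Require Import ring lra.
Import Order.TTheory GRing.Theory Num.Theory.
Local Open Scope ring_scope.

(* At an optimum of [sum_i w_i ln s_i] (s_i the surplus of buyer i) the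
   ratios s_i / w_i all coincide.  Otherwise, say s_i / w_i > s_k / w_k; as
   s_i > 0 and d_i >= 0, buyer i holds a positive amount of some item j, and
   moving a small amount e of item j from i to k keeps the allocation
   feasible and changes the objective by at least
   e (w_k / (s_k + e) - w_i / (s_i - e)) > 0 (using ln u - ln v >= 1 - v/u),
   contradicting optimality.  With w = 1 this gives (i); with w = d, the
   ratio (s_i + d_i) / d_i = s_i / d_i + 1 gives (ii). *)

Lemma subr_ln_ge {R : realType} (u v : R) :
  0 < u -> 0 < v -> 1 - v / u <= ln u - ln v.
Proof.
move=> u_gt0 v_gt0; have vu_gt0 : 0 < v / u by exact: divr_gt0.
have := @le_ln1Dx R (v / u - 1) ltac:(lra).
rewrite addrC subrK ln_div ?posrE //; lra.
Qed.

Lemma ln_exchange_gain {R : realType} {a b s t e : R} :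
  0 < a -> 0 < b -> 0 < t -> 0 < e -> e < s -> e * (a + b) < b * s - a * t ->
  a * ln s + b * ln t < a * ln (s - e) + b * ln (t + e).
Proof.
move=> a_gt0 b_gt0 t_gt0 e_gt0 lt_es small_e.
have se_gt0 : 0 < s - e by lra.
have te_gt0 : 0 < t + e by lra.
have lower_gain :
    a * (1 - s / (s - e)) + b * (1 - t / (t + e)) <=
    a * (ln (s - e) - ln s) + b * (ln (t + e) - ln t).
  by apply: lerD; rewrite ler_pM2l // subr_ln_ge //; lra.
have gain_eq : a * (1 - s / (s - e)) + b * (1 - t / (t + e)) =
    e * (b * s - a * t - e * (a + b)) / ((s - e) * (t + e)).
  by field; rewrite !lt0r_neq0.
have : 0 < e * (b * s - a * t - e * (a + b)) / ((s - e) * (t + e)).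
  by rewrite divr_gt0 ?mulr_gt0 // subr_gt0.
lra.
Qed.

Lemma sumrB_agree_off2 {V : zmodType} {n : nat} {F G : 'I_n -> V} {i k : 'I_n} :
  i != k -> (forall l, l != i -> l != k -> G l = F l) ->
  \sum_l G l - \sum_l F l = (G i - F i) + (G k - F k).
Proof.
move=> neq_ik eqGF; rewrite -sumrB (bigD1 i) //= (bigD1 k) 1?eq_sym //=.
by rewrite big1 ?addr0 // => l /andP[li lk]; rewrite eqGF ?subrr.
Qed.

Section Transfer.
Context {R : realType} {n m : nat}.
Implicit Types (x : 'I_n -> 'I_m -> R) (d : 'I_n -> R).

Definition transfer x (i k : 'I_n) (j : 'I_m) (e : R) : 'I_n -> 'I_m -> R :=
  fun l j' => x l j' +
    (if j' == j then (if l == k then e else 0) - (if l == i then e else 0) else 0).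

Lemma surplus_transfer x d i k j e l :
  surplus (transfer x i k j e) d l =
  surplus x d l + (if l == k then e else 0) - (if l == i then e else 0).
Proof.
rewrite /surplus /transfer big_split /= -big_mkcond big_pred1_eq; lra.
Qed.

Lemma feasible_transfer x i k j e :
  feasible x -> i != k -> 0 <= e <= x i j -> feasible (transfer x i k j e).
Proof.
move=> [x_ge0 col_le1] neq_ik /andP[e_ge0 le_ex]; split=> [l j'|j'].
  rewrite /transfer; case: eqP => [->|_]; last by rewrite addr0.
  have := x_ge0 l j; case: (eqVneq l i) => [->|_]; first by rewrite (negbTE neq_ik); lra.
  case: ifP => _; lra.
rewrite /transfer big_split /=; case: eqP => _; last by rewrite big1_eq addr0.
by rewrite sumrB -!big_mkcond !big_pred1_eq subrr addr0.
Qed.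

Lemma optimal_surplus_ratio_le {w d : 'I_n -> R} {x} :
  (forall i, 0 <= d i) -> (forall i, 0 < w i) -> optimal w d x ->
  forall i k, surplus x d i / w i <= surplus x d k / w k.
Proof.
move=> d_ge0 w_gt0 [feas_x [s_gt0 x_max]] i k.
rewrite leNgt; apply/negP => lt_ki.
have neq_ik : i != k by apply: contraTneq lt_ki => ->; rewrite ltxx.
set si := surplus x d i in lt_ki; set sk := surplus x d k in lt_ki.
have si_gt0 : 0 < si := s_gt0 i; have sk_gt0 : 0 < sk := s_gt0 k.
have wi_gt0 := w_gt0 i; have wk_gt0 := w_gt0 k.
set D := w k * si - w i * sk.
have D_gt0 : 0 < D.
  by move: lt_ki; rewrite ltr_pdivrMr // mulrAC ltr_pdivlMr // /D; lra.
have [j /= xij_gt0] : exists j, true && (0 < x i j).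
  apply: psumr_neq0P => [j _|]; first exact: feas_x.1.
  by have := d_ge0 i; rewrite /si /surplus in si_gt0; lra.
have wik_gt0 : 0 < w i + w k by lra.
pose mu := Num.min (x i j) (Num.min si (D / (w i + w k))).
have [mu_gt0 mu_xij mu_si mu_D] :
    [/\ 0 < mu, mu <= x i j, mu <= si & mu <= D / (w i + w k)].
  by rewrite !lt_min !ge_min xij_gt0 si_gt0 divr_gt0 // !lexx !orbT.
rewrite ler_pdivlMr // in mu_D.
pose e := mu / 2.
have [e_gt0 le_ex lt_esi small_e] :
    [/\ 0 < e, e <= x i j, e < si & e * (w i + w k) < D] by rewrite /e; split; lra.
pose y := transfer x i k j e.
have y_feas : feasible y by apply: feasible_transfer => //; apply/andP; split; lra.
have y_pos l : 0 < surplus y d l.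
  rewrite surplus_transfer; have := s_gt0 l.
  case: (eqVneq l i) => [->|_]; first by rewrite (negbTE neq_ik) -/si; lra.
  case: ifP => _; lra.
have := x_max y y_feas y_pos.
rewrite -subr_le0 /objective (sumrB_agree_off2 neq_ik) => [|l li lk]; last first.
  by rewrite surplus_transfer (negbTE li) (negbTE lk) addr0 subr0.
rewrite !surplus_transfer !eqxx (negbTE neq_ik) eq_sym (negbTE neq_ik) -/si -/sk.
rewrite !addr0 !subr0.
have := ln_exchange_gain wi_gt0 wk_gt0 sk_gt0 e_gt0 lt_esi small_e; lra.
Qed.

Lemma optimal_surplus_ratio_eq {w d : 'I_n -> R} {x} :
  (forall i, 0 <= d i) -> (forall i, 0 < w i) -> optimal w d x ->
  forall i k, surplus x d i / w i = surplus x d k / w k.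
Proof.
by move=> d_ge0 w_gt0 x_opt i k; apply: le_anti; rewrite !optimal_surplus_ratio_le.
Qed.

End Transfer.

Theorem proposition1 (R : realType) (n m : nat) (d : 'I_n -> R)
  (hd : forall i, 0 <= d i)
  (hstrict : exists x0 : 'I_n -> 'I_m -> R, feasible x0 /\ forall i, 0 < surplus x0 d i) :
  (forall x : 'I_n -> 'I_m -> R, optimal (fun _ => 1) d x ->
     forall i k, surplus x d i = surplus x d k) /\
  ((forall i, 0 < d i) ->
   forall x : 'I_n -> 'I_m -> R, optimal d d x ->
     forall i k, (\sum_(j < m) x i j) / d i = (\sum_(j < m) x k j) / d k).
Proof.
(* [hstrict] only makes the optimum exist; the claims are about any optimum. *)
split=> [x x_opt i k | d_gt0 x x_opt i k].
  by have := optimal_surplus_ratio_eq hd (fun=> ltr01) x_opt i k; rewrite !divr1.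
have sum_ratio l : (\sum_(j < m) x l j) / d l = surplus x d l / d l + 1.
  by rewrite /surplus mulrBl divff ?subrK // lt0r_neq0.
by rewrite !sum_ratio (optimal_surplus_ratio_eq hd d_gt0 x_opt i k).
Qed.
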